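(* Let $G$ be a finite connected vertex-transitive $(q+1)$-regular graph and $x_0\in V(G)$. Then, as formal power series in $t$, \[ \zeta_a(G,t)=\zeta(G,t)\,\zeta(G,-t). \]
   Context: Let $D_G$ be the symmetric digraph of $G$ (arcs $(u,v),(v,u)$ for each edge $uv$; $o(u,v)=u$, $t(u,v)=v$, $(u,v)^{-1}=(v,u)$). Generalized Ihara zeta function: $\zeta(G,t)=\exp\big(\sum_{k\ge1}\frac{N^0_k}{k}t^k\big)$, where $N^0_k$ is the number of reduced cycles of length $k$ starting at $x_0$; a cycle of length $k$ is an arc sequence $(e_1,\dots,e_k)$ with $t(e_i)=o(e_{i+1})$, $t(e_k)=o(e_1)$, starting at $x_0=o(e_1)$; reduced means neither it nor $(e_1,\dots,e_k,e_1,\dots,e_k)$ contains consecutive arcs $e,e^{-1}$. Generalized alternating zeta function: $\zeta_a(G,t)=\exp\big(\sum_{k\ge1}\frac{N^{0,a}_k}{k}t^k\big)$, where $N^{0,a}_k$ is the number of reduced $x_0$-alternating cycles of length $k$ in $D_G$. Here an alternating walk of length $r$ is an arc sequence $[e_1,\dots,e_r]$ with vertices $v_0,\dots,v_r$ such that either $e_i=(v_{i-1},v_i)$ for odd $i$ and $e_i=(v_i,v_{i-1})$ for even $i$, or $e_i=(v_i,v_{i-1})$ for odd $i$ and $e_i=(v_{i-1},v_i)$ for even $i$; an $x_0$-alternating cycle is one of even length with $v_0=v_r=x_0$; it is reduced if $e_{i+1}\ne e_i$ for all $i\le r-1$ and $e_r\ne e_1$. By vertex-transitivity these functions do not depend on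 $x_0$. *)

From mathcomp Require Import all_boot all_order all_algebra.
Set Implicit Arguments. Unset Strict Implicit. Unset Printing Implicit Defensive.
Import Order.TTheory GRing.Theory Num.Theory.
Local Open Scope ring_scope.

Definition fps := nat -> rat.

Definition fps_one : fps := fun n => (n == 0%N)%:R.

Definition fps_mul (f g : fps) : fps :=
  fun n => \sum_(i < n.+1) f i * g (n - i)%N.

Fixpoint fps_pow (f : fps) (m : nat) : fps :=
  match m with 0%N => fps_one | m'.+1 => fps_mul f (fps_pow f m') end.

(** exp f = \sum_m f^m / m!  ; for f with zero constant term, f^m has
    valuation >= m, so the n-th coefficient only involves m <= n. *)
Definition fps_exp (f : fps) : fps :=
  fun n => \sum_(m < n.+1) fps_pow f m n / (m`!)%:R.

Definition fps_negt (f : fps) : fps := fun n => (-1) ^+ n * f n.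

Definition logser (N : nat -> nat) : fps :=
  fun k => if k == 0%N then 0 else (N k)%:R / k%:R.

Section Graph.
Variables (T : finType) (e : rel T).

(** arcs of the symmetric digraph D_G are pairs (u,v) with u ~ v;
    o(u,v) = u = a.1, t(u,v) = v = a.2 *)
Definition is_arc (a : T * T) : bool := e a.1 a.2.
Definition arc_inv (a : T * T) : T * T := (a.2, a.1).

Definition connected_graph : Prop := forall x y : T, connect e x y.

Definition vertex_transitive : Prop :=
  forall x y : T, exists f : T -> T,
    [/\ bijective f, (forall u v, e (f u) (f v) = e u v) & f x = y].

Definition regular (d : nat) : Prop := forall x : T, #|[set y | e x y]| = d.

Fixpoint no_backtrack (s : seq (T * T)) : bool :=
  match s with
  | a :: ((b :: _) as s') => (b != arc_inv a) && no_backtrack s'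
  | _ => true
  end.

Definition is_cycle_at (x0 : T) (s : seq (T * T)) : bool :=
  [&& all is_arc s, 0 < size s,
      [forall i : 'I_(size s),
         (nth (x0, x0) s i).2 == (nth (x0, x0) s ((i.+1) %% size s)).1]
    & (nth (x0, x0) s 0).1 == x0]%N.

Definition reduced_cycle (s : seq (T * T)) : bool :=
  no_backtrack s && no_backtrack (s ++ s).

Definition N0 (x0 : T) (k : nat) : nat :=
  #|[set c : k.-tuple (T * T) | is_cycle_at x0 c && reduced_cycle c]|.

(** ** Alternating cycles.
   0-based: arc e_(i+1) = nth s i, vertex v_i = nth vs i.
   pattern b = false: paper-odd i (0-based even) e = (v_{i-1},v_i);
   pattern b = true : the other alternative. *)
Definition alt_pattern (b : bool) (x0 : T) (s : seq (T * T)) (vs : seq T) : bool :=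
  [forall i : 'I_(size s),
     nth (x0, x0) s i ==
       (if odd i != b then (nth x0 vs i.+1, nth x0 vs i)
        else (nth x0 vs i, nth x0 vs i.+1))].

Definition is_alt_cycle_at (x0 : T) (k : nat) (c : k.-tuple (T * T)) : bool :=
  [&& all is_arc c, ~~ odd k &
      [exists vs : k.+1.-tuple T,
         [&& nth x0 vs 0 == x0, nth x0 vs k == x0 &
             alt_pattern false x0 c vs || alt_pattern true x0 c vs]]].

Fixpoint no_repeat (s : seq (T * T)) : bool :=
  match s with
  | a :: ((b :: _) as s') => (b != a) && no_repeat s'
  | _ => true
  end.

Definition reduced_alt (x0 : T) (s : seq (T * T)) : bool :=
  no_repeat s && (nth (x0, x0) s (size s).-1 != nth (x0, x0) s 0).

Definition Na (x0 : T) (k : nat) : nat :=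
  #|[set c : k.-tuple (T * T) | is_alt_cycle_at x0 c && reduced_alt x0 c]|.

Definition ihara_zeta (x0 : T) : fps := fps_exp (logser (N0 x0)).
Definition alt_zeta (x0 : T) : fps := fps_exp (logser (Na x0)).

End Graph.

From mathcomp Require Import all_boot all_order all_algebra.
From mathcomp Require Import zify ring.
From Stdlib Require Import FunctionalExtensionality.
Set Implicit Arguments. Unset Strict Implicit. Unset Printing Implicit Defensive.
Import Order.TTheory GRing.Theory Num.Theory.

(* Both zeta functions are exponentials of logarithmic series
   L_N(t) = \sum_(k >= 1) N_k / k * t^k, so it suffices to show that the exponents
   satisfy L_Na(t) = L_N0(t) + L_N0(-t), i.e. Na_k = 0 for odd k (alternating cycles
   have even length by definition) and Na_k = 2 * N0_k for even k > 0.

   The counting identity is a bijection.  "Twisting" a sequence of arcs -- reversing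
   the arcs sitting at positions of one parity -- turns an alternating closed walk at
   x0 into an ordinary closed walk at x0, and, for even length, turns the cyclic
   no-repetition condition into the cyclic no-backtracking condition.  Hence every
   reduced cycle yields two reduced alternating cycles (one per choice of parity), and
   these are distinct because the graph has no loops. *)

(* Positional description of [cycle r s]: every element is r-related to its
   cyclic successor.  Both cycle notions of the paper are stated positionally. *)
Lemma cycle_nthP (A : Type) (r : rel A) (x : A) (s : seq A) :
  reflect (forall i, i < size s -> r (nth x s i) (nth x s (i.+1 %% size s)))
          (cycle r s).
Proof.
case: s => [|a s]; first by constructor.
rewrite /cycle -[path _ _ _]/(sorted r (rcons (a :: s) a)).
apply: (iffP (sortedP x)) => h i hi.
  have := h i; rewrite !nth_rcons size_rcons /= ltnS hi.
  case: ifP => hi1; first by rewrite modn_small // => ->.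
  have -> : i.+1 = (size s).+1 by move: hi1 hi => /negbT /=; lia.
  by rewrite modnn eqxx => ->.
rewrite size_rcons ltnS in hi.
have := h i hi; rewrite !nth_rcons /= ltnS -ltnS hi.
case: ifP => hi1; first by rewrite modn_small.
have -> : i.+1 = (size s).+1 by move: hi1 hi => /negbT /=; lia.
by rewrite modnn eqxx; apply.
Qed.

(* In a cycle of even length, cyclically consecutive positions have opposite
   parity; this is what makes twisting compatible with the wrap-around. *)
Lemma odd_succ_mod k i : ~~ odd k -> i < k -> odd (i.+1 %% k) = ~~ odd i.
Proof.
move=> ev lt; case: (ltnP i.+1 k) => hi1; first by rewrite modn_small.
have Ek : k = i.+1 by lia.
by move: ev; rewrite Ek modnn /= negbK => ->.
Qed.

Section Arcs.
Variable T : finType.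
Implicit Types (a : T * T) (s : seq (T * T)) (b : bool).

Lemma arc_invK : involutive (@arc_inv T).
Proof. by case. Qed.

Definition flip b a := if b then arc_inv a else a.

Lemma flipK b : involutive (flip b).
Proof. by case: b => a //=; rewrite arc_invK. Qed.

Lemma arc_inv_flip b a : arc_inv (flip b a) = flip (~~ b) a.
Proof. by case: b => //=; rewrite arc_invK. Qed.

Fixpoint twist b s : seq (T * T) :=
  if s is a :: s' then flip b a :: twist (~~ b) s' else [::].

Lemma size_twist b s : size (twist b s) = size s.
Proof. by elim: s b => [|a s IH] b //=; rewrite IH. Qed.

Lemma nth_twist b s d i : i < size s ->
  nth d (twist b s) i = flip (odd i != b) (nth d s i).
Proof.
elim: s b i => [|a s IH] b [|i] //= hi; first by case: b.
by rewrite IH //; case: b; case: (odd i).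
Qed.

Lemma twistK b : involutive (twist b).
Proof. by move=> s; elim: s b => [|a s IH] b //=; rewrite flipK IH. Qed.

Definition link a a' := a.2 == a'.1.
Definition no_backtrack_rel a a' := a' != arc_inv a.
Definition no_repeat_rel a a' := a' != a.

Lemma no_backtrack_sorted s : no_backtrack s = sorted no_backtrack_rel s.
Proof.
case: s => // a s; elim: s a => [|a' s IH] a //=.
by rewrite -[path _ a' s]/(sorted _ (a' :: s)) -IH.
Qed.

Lemma no_repeat_sorted s : no_repeat s = sorted no_repeat_rel s.
Proof.
case: s => // a s; elim: s a => [|a' s IH] a //=.
by rewrite -[path _ a' s]/(sorted _ (a' :: s)) -IH.
Qed.

(* Key local fact: for even length, twisting exchanges the cyclic
   no-backtracking condition with the cyclic no-repetition condition, since
   consecutive arcs are flipped oppositely. *)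
Lemma twist_cycle b s : ~~ odd (size s) ->
  cycle no_backtrack_rel (twist b s) = cycle no_repeat_rel s.
Proof.
case: s => [|d s'] // ev; set s := d :: s' in ev *.
have s_gt0 : 0 < size s by [].
have step i : i < size s ->
    no_backtrack_rel (nth d (twist b s) i) (nth d (twist b s) (i.+1 %% size s))
  = no_repeat_rel (nth d s i) (nth d s (i.+1 %% size s)).
  move=> hi; rewrite /no_backtrack_rel /no_repeat_rel !nth_twist ?ltn_pmod //.
  rewrite arc_inv_flip odd_succ_mod // (_ : ~~ odd i != b = ~~ (odd i != b)).
    by rewrite (inj_eq (can_inj (flipK _))).
  by case: b; case: (odd i).
apply/(cycle_nthP _ d)/(cycle_nthP _ d); rewrite size_twist => h i hi.
  by rewrite -step ?h.
by rewrite step ?h.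
Qed.
Lemma twist_tupleP k b (c : k.-tuple (T * T)) : size (twist b c) == k.
Proof. by rewrite size_twist size_tuple. Qed.

Definition twist_tuple k b (c : k.-tuple (T * T)) : k.-tuple (T * T) :=
  Tuple (twist_tupleP b c).

End Arcs.
Arguments link {T}.
Arguments no_backtrack_rel {T}.
Arguments no_repeat_rel {T}.

Section Cycles.
Variables (T : finType) (e : rel T) (x0 : T).
Hypotheses (e_sym : symmetric e) (e_irr : irreflexive e).
Implicit Types (a : T * T) (s : seq (T * T)) (b : bool).

Definition closed_walk s := cycle link s && ((head (x0, x0) s).1 == x0).

Lemma is_cycle_atE s :
  is_cycle_at e x0 s = [&& all (is_arc e) s, 0 < size s & closed_walk s].
Proof.
rewrite /is_cycle_at /closed_walk nth0; congr [&& _, _ & _ && _].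
apply/forallP/(cycle_nthP _ (x0, x0)) => h i; last exact: h i (ltn_ord i).
by move=> hi; exact: h (Ordinal hi).
Qed.

Lemma reduced_cycleE s : reduced_cycle s = cycle no_backtrack_rel s.
Proof.
case: s => [|a s] //; rewrite /reduced_cycle !no_backtrack_sorted /=.
by rewrite cat_path rcons_path /=; case: path; rewrite //= andbT.
Qed.

Lemma reduced_altE s : 0 < size s -> reduced_alt x0 s = cycle no_repeat_rel s.
Proof.
case: s => [|a s] // _; rewrite /reduced_alt no_repeat_sorted nth_last /=.
by rewrite rcons_path /no_repeat_rel eq_sym.
Qed.

Lemma alt_patternE b s vs : alt_pattern b x0 s vs =
  [forall i : 'I_(size s), nth (x0, x0) (twist b s) i == (nth x0 vs i, nth x0 vs i.+1)].
Proof.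
apply: eq_forallb => i; rewrite nth_twist //; case: (odd i != b) => //=.
by rewrite -[in RHS](inj_eq (can_inj (@arc_invK T))) arc_invK.
Qed.
Lemma closed_walk_vertices k t :
  size t = k -> 0 < k ->
  [exists vs : k.+1.-tuple T,
     [&& nth x0 vs 0 == x0, nth x0 vs k == x0 &
         [forall i : 'I_(size t),
            nth (x0, x0) t i == (nth x0 vs i, nth x0 vs i.+1)]]]
  = closed_walk t.
Proof.
move=> <- t_gt0; have wrap i : i < size t -> ~~ (i.+1 < size t) -> i.+1 = size t.
  by move=> hi hi1; lia.
apply/existsP/andP => [[vs /and3P[/eqP v0 /eqP vk /forallP vt]] | []].
  have tv i : i < size t -> nth (x0, x0) t i = (nth x0 vs i, nth x0 vs i.+1).
    by move=> hi; apply/eqP/(vt (Ordinal hi)).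
  split; last by rewrite -nth0 tv // v0.
  apply/(cycle_nthP _ (x0, x0)) => i hi; rewrite /link tv //=.
  case: (boolP (i.+1 < size t)) => hi1; first by rewrite modn_small // tv.
  by rewrite (wrap i) // modnn tv //= v0 vk.
move=> /(cycle_nthP _ (x0, x0)) tc /eqP t0.
pose vs := rcons [seq a.1 | a <- t] x0.
have vs_size : size vs == (size t).+1 by rewrite size_rcons size_map.
have vsE i : nth x0 vs i = if i < size t then (nth (x0, x0) t i).1 else x0.
  by rewrite nth_rcons size_map if_same; case: ifP => // hi; rewrite (nth_map (x0, x0)).
exists (Tuple vs_size); rewrite /= !vsE t_gt0 ltnn nth0 t0 !eqxx /=.
apply/forallP => i; have hi := ltn_ord i; rewrite !vsE hi.
have := tc i hi; rewrite /link; case: ifP => hi1.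
  by rewrite modn_small // => /eqP <-; case: (nth _ t i).
by rewrite (wrap i) ?hi1 // modnn nth0 t0; case: (nth _ t i) => ? ? /= /eqP ->.
Qed.

Lemma is_alt_cycle_atE k (c : k.-tuple (T * T)) : 0 < k ->
  is_alt_cycle_at e x0 c =
  [&& all (is_arc e) c, ~~ odd k & [exists b, closed_walk (twist b c)]].
Proof.
move=> k_gt0; rewrite /is_alt_cycle_at; congr [&& _, _ & _].
have walkE b : [exists vs : k.+1.-tuple T,
    [&& nth x0 vs 0 == x0, nth x0 vs k == x0 & alt_pattern b x0 c vs]]
  = closed_walk (twist b c).
  have tw_size : size (twist b c) = k by rewrite size_twist size_tuple.
  rewrite -(closed_walk_vertices tw_size k_gt0).
  apply: eq_existsb => vs; rewrite alt_patternE; congr [&& _, _ & _].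
  apply/forallP/forallP => h i; first exact: h (cast_ord (size_twist b c) i).
  exact: h (cast_ord (esym (size_twist b c)) i).
apply/existsP/existsP => [[vs /and3P[v0 vk /orP[]]] | [b]].
- by exists false; rewrite -walkE; apply/existsP; exists vs; rewrite v0 vk.
- by exists true; rewrite -walkE; apply/existsP; exists vs; rewrite v0 vk.
rewrite -walkE => /existsP[vs /and3P[v0 vk vb]]; exists vs; rewrite v0 vk.
by case: b vb => ->; rewrite ?orbT.
Qed.

Lemma all_twist b s : all (is_arc e) (twist b s) = all (is_arc e) s.
Proof.
elim: s b => [|a s IH] b //=; rewrite IH; case: b => //.
by case: a => u v; rewrite /is_arc /= e_sym.
Qed.

(* Twists of two closed walks at [x0] with different parities differ: their
   first arcs would be a loop at [x0]. *)
Lemma twist_closed_walk_inj b b' s s' :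
  0 < size s -> all (is_arc e) s -> closed_walk s -> closed_walk s' ->
  twist b s = twist b' s' -> b = b'.
Proof.
case: s s' => [|[u v] s] // [|[u' v'] s'] // _ /= /andP[uv _].
move=> /andP[_ /eqP /= u0] /andP[_ /eqP /= u'0] [head_eq _].
by case: b b' head_eq => [] [] //= [? ?]; subst; rewrite /is_arc /= e_irr in uv.
Qed.

Lemma Na_odd k : odd k -> Na e x0 k = 0.
Proof.
move=> k_odd; apply/eqP; rewrite cards_eq0; apply/eqP/setP => c.
by rewrite !inE /is_alt_cycle_at k_odd andbF.
Qed.

(* Counting identity: [(b, c) |-> twist b c] is a bijection from pairs of a
   parity and a reduced cycle onto the reduced alternating cycles of length k. *)
Lemma Na_even k : 0 < k -> ~~ odd k -> Na e x0 k = 2 * N0 e x0 k.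
Proof.
move=> k_gt0 k_even.
set C := [set c : k.-tuple (T * T) | is_cycle_at e x0 c && reduced_cycle c].
have C_E (c : k.-tuple (T * T)) : (c \in C) =
    [&& all (is_arc e) c, closed_walk c & cycle no_backtrack_rel c].
  by rewrite inE is_cycle_atE reduced_cycleE size_tuple k_gt0 -andbA.
pose tw (bc : bool * k.-tuple (T * T)) := twist_tuple bc.1 bc.2.
have altE : [set c : k.-tuple (T * T) | is_alt_cycle_at e x0 c && reduced_alt x0 c]
    = tw @: setX [set: bool] C.
  apply/setP => a; rewrite inE is_alt_cycle_atE // reduced_altE ?size_tuple //.
  rewrite k_even /= -andbA; apply/idP/imsetP => [/and3P[arcs /existsP[b cw] nr] | [[b c]]].
    exists (b, twist_tuple b a); last by apply: val_inj; rewrite /= twistK.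
    by rewrite in_setX in_setT C_E /= all_twist arcs cw twist_cycle ?size_tuple.
  rewrite in_setX in_setT /= C_E => /and3P[arcs cw nb] ->.
  rewrite /= all_twist arcs -(twist_cycle b) ?size_twist ?size_tuple // twistK nb.
  by rewrite andbT; apply/existsP; exists b; rewrite twistK.
rewrite /Na altE card_in_imset; first by rewrite cardsX cardsT card_bool.
move=> [b c] [b' c']; rewrite !in_setX !in_setT /= !C_E.
move=> /and3P[arcs cw _] /and3P[_ cw' _] /(congr1 val) /= tw_eq.
have c_gt0 : 0 < size c by rewrite size_tuple.
have bb' := twist_closed_walk_inj c_gt0 arcs cw cw' tw_eq; subst b'.
by congr (_, _); apply: val_inj; exact: (can_inj (twistK b) tw_eq).
Qed.
End Cycles.

Local Open Scope ring_scope.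

Lemma negt_one : fps_negt fps_one = fps_one.
Proof.
by apply: functional_extensionality => -[|n]; rewrite /fps_negt /fps_one ?mulr0 ?mul1r.
Qed.

Lemma negt_mul f g : fps_negt (fps_mul f g) = fps_mul (fps_negt f) (fps_negt g).
Proof.
apply: functional_extensionality => n; rewrite /fps_negt /fps_mul mulr_sumr.
apply: eq_bigr => i _; have le_in : (i <= n)%N by rewrite -ltnS.
by rewrite -{1}(subnKC le_in) exprD; ring.
Qed.

Lemma negt_pow f m : fps_negt (fps_pow f m) = fps_pow (fps_negt f) m.
Proof. by elim: m => [|m IH] /=; rewrite ?negt_one // negt_mul IH. Qed.

Lemma exp_negt f : fps_exp (fps_negt f) = fps_negt (fps_exp f).
Proof.
apply: functional_extensionality => n; rewrite /fps_exp {2}/fps_negt mulr_sumr.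
by apply: eq_bigr => m _; rewrite -negt_pow /fps_negt mulrA.
Qed.

(* [f] and the polynomial [p] have the same coefficients below degree [N];
   coefficients of products, powers and exponentials below [N] only depend on
   such truncations. *)
Definition agree (N : nat) (f : fps) (p : {poly rat}) : Prop :=
  forall i, (i < N)%N -> f i = p`_i.

Lemma agree_trunc N f : agree N f (\poly_(i < N) f i).
Proof. by move=> i hi; rewrite coef_poly hi. Qed.

Lemma agree_mul N f g (p q : {poly rat}) :
  agree N f p -> agree N g q -> agree N (fps_mul f g) (p * q).
Proof.
move=> fp gq n hn; rewrite coefM /fps_mul; apply: eq_bigr => i _.
have hi := ltn_ord i; rewrite fp ?gq //; lia.
Qed.

Lemma agree_pow N f (p : {poly rat}) m : agree N f p -> agree N (fps_pow f m) (p ^+ m).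
Proof.
move=> fp; elim: m => [|m IH] /=; first by move=> n _; rewrite expr0 coef1.
by rewrite exprS; apply: agree_mul.
Qed.

Lemma coef_mulX_pow (p q : {poly rat}) j l n :
  p`_0 = 0 -> q`_0 = 0 -> (n < j + l)%N -> (p ^+ j * q ^+ l)`_n = 0.
Proof.
have splitX (r : {poly rat}) : r`_0 = 0 -> r = drop_poly 1 r * 'X.
  move=> r0; rewrite -{1}(poly_take_drop 1 r) expr1.
  suff -> : take_poly 1 r = 0 by rewrite add0r.
  by apply/polyP => -[|i]; rewrite coef_take_poly coef0 ?r0.
move=> /splitX -> /splitX -> hn; rewrite !exprMn.
rewrite (_ : _ * _ = drop_poly 1 p ^+ j * drop_poly 1 q ^+ l * 'X^(j + l)).
  by rewrite coefMXn hn.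
by rewrite exprD; ring.
Qed.

Definition exp_poly (N : nat) (p : {poly rat}) : {poly rat} :=
  \sum_(j < N) (j`!%:R)^-1 *: p ^+ j.

(* Terms of index beyond the degree vanish in [fps_exp], so it agrees with the
   truncated exponential of any truncation. *)
Lemma agree_exp N f (p : {poly rat}) : p`_0 = 0 -> agree N f p -> agree N (fps_exp f) (exp_poly N p).
Proof.
move=> p0 fp n hn; rewrite /fps_exp coef_sum.
rewrite (big_ord_widen N (fun m : nat => fps_pow f m n / m`!%:R) hn) big_mkcond /=.
apply: eq_bigr => j _; rewrite coefZ (agree_pow j fp) // mulrC.
case: ifPn => // hj; rewrite -[p ^+ j]mulr1 -(expr0 p) coef_mulX_pow ?mulr0 //.
by rewrite addn0 ltnNge.
Qed.

Lemma sum_triangle (V : nmodType) (F : nat -> nat -> V) M :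
  \sum_(m < M) \sum_(i < m.+1) F i (m - i)%N = \sum_(i < M) \sum_(l < M - i) F i l.
Proof.
elim: M => [|M IH]; first by rewrite !big_ord0.
rewrite [LHS]big_ord_recr [RHS]big_ord_recr /= IH subSnn big_ord1.
have -> : \sum_(i < M) \sum_(l < M.+1 - i) F i l =
    \sum_(i < M) (\sum_(l < M - i) F i l + F i (M - i)%N).
  apply: eq_bigr => i _; rewrite subSn; last exact: ltnW.
  by rewrite big_ord_recr.
by rewrite big_split /= -addrA big_ord_recr /= subnn.
Qed.

Section ExpAdd.
Variables (N : nat) (p q : {poly rat}).

Let term j l := ((j`!%:R)^-1 * (l`!%:R)^-1) *: (p ^+ j * q ^+ l).

Lemma exp_poly_binomial :
  exp_poly N (p + q) = \sum_(l < N) \sum_(j < N - l) term j l.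
Proof.
rewrite /exp_poly -(sum_triangle (fun l j => term j l)); apply: eq_bigr => m _.
rewrite exprDn scaler_sumr; apply: eq_bigr => i _.
have le_im : (i <= m)%N by rewrite -ltnS.
rewrite /term -scaler_nat scalerA; congr (_ *: _).
have fact_neq0 k : (k`!%:R : rat) != 0 by rewrite pnatr_eq0 -lt0n fact_gt0.
rewrite -(bin_fact le_im) !natrM; field.
by rewrite !fact_neq0 pnatr_eq0 -lt0n bin_gt0 le_im.
Qed.

Lemma exp_poly_mul :
  exp_poly N p * exp_poly N q = \sum_(l < N) \sum_(j < N) term j l.
Proof.
rewrite /exp_poly mulr_suml exchange_big; apply: eq_bigr => l _.
rewrite mulr_sumr; apply: eq_bigr => j _.
by rewrite /term -scalerAl -scalerAr scalerA mulrC.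
Qed.

(* The two expansions differ by terms of valuation at least N. *)
Lemma exp_poly_add n : p`_0 = 0 -> q`_0 = 0 -> (n < N)%N ->
  (exp_poly N (p + q))`_n = (exp_poly N p * exp_poly N q)`_n.
Proof.
move=> p0 q0 hn; rewrite exp_poly_binomial exp_poly_mul !coef_sum.
apply: eq_bigr => l _; rewrite !coef_sum.
rewrite (big_ord_widen N (fun j : nat => (term j l)`_n) (leq_subr l N)) big_mkcond.
apply: eq_bigr => j _; case: ifPn => // hj.
by rewrite coefZ coef_mulX_pow ?mulr0 //; move: hj; rewrite -leqNgt; lia.
Qed.
End ExpAdd.

Lemma exp_add (f g : fps) : f 0%N = 0 -> g 0%N = 0 ->
  fps_exp (fun n => f n + g n) = fps_mul (fps_exp f) (fps_exp g).
Proof.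
move=> f0 g0; apply: functional_extensionality => n.
pose p := \poly_(i < n.+1) f i; pose q := \poly_(i < n.+1) g i.
have fp : agree n.+1 f p := agree_trunc f.
have gq : agree n.+1 g q := agree_trunc g.
have p0 : p`_0 = 0 by rewrite -fp.
have q0 : q`_0 = 0 by rewrite -gq.
have fgpq : agree n.+1 (fun i => f i + g i) (p + q).
  by move=> i hi; rewrite coefD fp ?gq.
rewrite (agree_exp _ fgpq) ?coefD ?p0 ?q0 ?addr0 //.
rewrite (agree_mul (agree_exp p0 fp) (agree_exp q0 gq)) //.
exact: exp_poly_add.
Qed.

Lemma logser_alt (T : finType) (e : rel T) (x0 : T) :
  symmetric e -> irreflexive e ->
  logser (Na e x0) = (fun k => logser (N0 e x0) k + fps_negt (logser (N0 e x0)) k).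
Proof.
move=> e_sym e_irr; apply: functional_extensionality => -[|k] /=.
  by rewrite /fps_negt /logser mulr0 addr0.
rewrite /logser /fps_negt /= -signr_odd; case: (boolP (odd k.+1)) => k_par.
  by rewrite Na_odd // expr1 mulN1r subrr mul0r.
by rewrite Na_even // expr0 mul1r natrM; ring.
Qed.

Theorem proposition3 (T : finType) (e : rel T)
  (e_sym : symmetric e) (e_irr : irreflexive e)
  (G_conn : connected_graph e) (G_vt : vertex_transitive e)
  (q : nat) (G_reg : regular e q.+1) (x0 : T) :
  alt_zeta e x0 = fps_mul (ihara_zeta e x0) (fps_negt (ihara_zeta e x0)).
Proof.
rewrite /alt_zeta /ihara_zeta (logser_alt x0 e_sym e_irr) exp_add ?exp_negt //.
Qed.
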